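(* In the setting of the $i$-th horizontal composition of $\phi$ (with $n$ variables) and $\psi$ (with $m$ variables, dinatural in its $i$-th variable), let $k\in n$. Then $\phi\ast_i\psi$ is dinatural in its $(i-1+k)$-th variable if and only if, for all choices of objects $B_1,\dots,B_{i-1},A_1,\dots,A_{k-1},A_{k+1},\dots,A_n,B_{i+1},\dots,B_m$ of $\mathbb C$ (used to form the focalisations $\bar\phi^k$ and $\bar\psi^i$), the classical horizontal composite $\bar\phi^k\ast\bar\psi^i$ is dinatural in its only variable.
   Context: Notation: $k$ also denotes $\{1,\dots,k\}$; $\mathbb C^\alpha=\mathbb C^{\alpha_1}\times\cdots$ with $\mathbb C^+=\mathbb C$, $\mathbb C^-=\mathbb C^{op}$; for $\mathbf A=(A_1,\dots,A_n)$, $\sigma\colon k\to n$, $\mathbf A\sigma=(A_{\sigma1},\dots,A_{\sigma k})$; a morphism in a contravariant argument is read in $\mathbb C^{op}$. A transformation $\phi\colon F\to G$ ($F\colon\mathbb C^\alpha\to\mathbb C$, $G\colon\mathbb C^\beta\to\mathbb C$) of type $|\alpha|\xrightarrow{\sigma}n\xleftarrow{\tau}|\beta|$ is a family $\phi_{\mathbf A}\colon F(\mathbf A\sigma)\to G(\mathbf A\tau)$, $\mathbf A\in\mathrm{Ob}(\mathbb C)^n$. $\mathbf A[X,Y/i]\sigma$ is the tuple whose $j$-th entry is $X$ if $\sigma j=i,\alpha_j=-$, $Y$ if $\sigma j=i,\alpha_j=+$, $A_{\sigma j}$ (or $1_{A_{\sigma j}}$ for morphisms) otherwise; $\mathbf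 A[X/i]=\mathbf A[X,X/i]$. $\phi$ is dinatural in its $i$-th variable if for all $A_j$ ($j\ne i$) and $f\colon A\to B$: $G(\mathbf A[A,f/i]\tau)\circ\phi_{\mathbf A[A/i]}\circ F(\mathbf A[f,A/i]\sigma)=G(\mathbf A[f,B/i]\tau)\circ\phi_{\mathbf A[B/i]}\circ F(\mathbf A[B,f/i]\sigma)$. Focalisation: for $\varphi\colon T\to S$ of type $|\alpha|\xrightarrow{\sigma}p\xleftarrow{\tau}|\beta|$ and fixed objects $A_j$ ($j\ne k$), $\bar T^k,\bar S^k\colon\mathbb C^{op}\times\mathbb C\to\mathbb C$ are $\bar T^k(X,Y)=T(\mathbf A[X,Y/k]\sigma)$, $\bar S^k(X,Y)=S(\mathbf A[X,Y/k]\tau)$ (also on morphisms), and $\bar\varphi^k\colon\bar T^k\to\bar S^k$ is the transformation of type $2\to1\leftarrow2$ with $\bar\varphi^k_X=\varphi_{\mathbf A[X/k]}$. Classical horizontal composite: for $\phi\colon F\to G$ and $\psi\colon H\to K$ of type $2\to1\leftarrow2$ with $F,G,H,K\colon\mathbb C^{op}\times\mathbb C\to\mathbb C$ and $\psi$ dinatural, $\phi\ast\psi\colon H(G^{op},F)\to K(F^{op},G)$ is the transformation of type $4\to1\leftarrow4$ between the functors $\mathbb C^{[+,-,-,+]}\to\mathbb C$, $(A,B,C,D)\mapsto H(G(A,B),F(C,D))$ and $(A,B,C,D)\mapsto K(F(A,B),G(C,D))$, with components $(\phi\ast\psi)_A=K(1,\phi_A)\circ\psi_{F(A,A)}\circ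 H(\phi_A,1)$. General $i$-th horizontal composition: let $F\colon\mathbb C^\alpha\to\mathbb C$, $G\colon\mathbb C^\beta\to\mathbb C$, $H\colon\mathbb C^\gamma\to\mathbb C$, $K\colon\mathbb C^\delta\to\mathbb C$, $\phi\colon F\to G$ of type $|\alpha|\xrightarrow{\sigma}n\xleftarrow{\tau}|\beta|$ with variables $\mathbf A=(A_1,\dots,A_n)$, and $\psi\colon H\to K$ of type $|\gamma|\xrightarrow{\eta}m\xleftarrow{\theta}|\delta|$ with variables $\mathbf B=(B_1,\dots,B_m)$, dinatural in its $i$-th variable. $\phi\ast_i\psi$ has variables $(B_1,\dots,B_{i-1},A_1,\dots,A_n,B_{i+1},\dots,B_m)$. Its domain functor is obtained from $H$ by substituting into each argument position $u$ with $\eta u=i$ the functor $F$ if $\gamma_u=+$ and $G^{op}$ if $\gamma_u=-$; its codomain from $K$ by substituting into each position $v$ with $\theta v=i$ the functor $G$ if $\delta_v=+$ and $F^{op}$ if $\delta_v=-$. In its type, an argument coming from the $j$-th argument of a copy of $F$ has variable $A_{\sigma j}$, from a copy of $G$ variable $A_{\tau j}$, and unchanged positions $u$ of $H$ (resp. $v$ of $K$) variable $B_{\eta u}$ (resp. $B_{\theta v}$). Its component at $\mathbf B[\mathbf A/i]$ is $K(\mathbf B[F(\mathbf A\sigma),\phi_{\mathbf A}/i]\theta)\circ\psi_{\mathbf B[F(\mathbf A\sigma)/i]}\circ H(\mathbf B[\phi_{\mathbf A},F(\mathbf A\sigma)/i]\eta)$. *)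

From mathcomp Require Import all_boot.
Set Implicit Arguments. Unset Strict Implicit. Unset Printing Implicit Defensive.

Record category := Category {
  ob :> Type;
  hom : ob -> ob -> Type;
  idm : forall A, hom A A;
  comp : forall A B C, hom B C -> hom A B -> hom A C;
  comp_id_l : forall A B (f : hom A B), comp (idm B) f = f;
  comp_id_r : forall A B (f : hom A B), comp f (idm A) = f;
  comp_assoc : forall A B C D (h : hom C D) (g : hom B C) (f : hom A B),
      comp h (comp g f) = comp (comp h g) f }.
Arguments hom {c}.
Arguments idm {c} A.
Arguments comp {c A B C}.

(* morphism in C^+ = C (c = true) or C^- = C^op (c = false) *)
Definition mhom (C : category) (c : bool) (X Y : C) : Type :=
  if c then hom X Y else hom Y X.
Definition mid (C : category) (c : bool) (X : C) : mhom c X X :=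
  if c as c0 return mhom c0 X X then idm X else idm X.
Definition mcomp (C : category) (c : bool) (X Y Z : C) :
    mhom c Y Z -> mhom c X Y -> mhom c X Z :=
  match c as c0 return mhom c0 Y Z -> mhom c0 X Y -> mhom c0 X Z with
  | true => fun g f => comp g f
  | false => fun g f => comp f g
  end.
Definition mflip (C : category) (c : bool) (X Y : C) :
    mhom (~~ c) X Y -> mhom c Y X :=
  match c as c0 return mhom (~~ c0) X Y -> mhom c0 Y X with
  | true => fun f => f
  | false => fun f => f
  end.

(* ---------- functors C^al -> C  (arguments indexed by I, al j = variance) *)
Record fdata (C : category) (I : Type) (al : I -> bool) := FData {
  fobj : (I -> C) -> C;
  fmor : forall X Y : I -> C,
      (forall j, mhom (al j) (X j) (Y j)) -> hom (fobj X) (fobj Y) }.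
Arguments fobj {C I al}.
Arguments fmor {C I al} f {X Y}.

Record mfunctor (C : category) (I : Type) (al : I -> bool) := MFunctor {
  fdata_of :> fdata C al;
  fmor_id : forall X : I -> C,
      fmor fdata_of (fun j => mid (al j) (X j)) = idm (fobj fdata_of X);
  fmor_comp : forall (X Y Z : I -> C)
      (f : forall j, mhom (al j) (X j) (Y j))
      (g : forall j, mhom (al j) (Y j) (Z j)),
      fmor fdata_of (fun j => mcomp (g j) (f j))
      = comp (fmor fdata_of g) (fmor fdata_of f) }.

(* ---------- transformations of type I --sg--> V <--tu-- J ---------- *)
Definition trans (C : category) (I J : Type) (al : I -> bool) (be : J -> bool)
    (F : fdata C al) (G : fdata C be) (V : Type) (sg : I -> V) (tu : J -> V) :=
  forall A : V -> C, hom (fobj F (fun j => A (sg j))) (fobj G (fun j => A (tu j))).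

Definition upd (C : category) (V : eqType) (A : V -> C) (v : V) (X : C) : V -> C :=
  fun w => if w == v then X else A w.

Definition objsub (C : category) (I : Type) (V : eqType) (al : I -> bool)
    (sg : I -> V) (A : V -> C) (v : V) (O : bool -> C) : I -> C :=
  fun j => if sg j == v then O (al j) else A (sg j).

Definition msub (C : category) (I : Type) (V : eqType) (al : I -> bool)
    (sg : I -> V) (A : V -> C) (v : V) (O0 O1 : bool -> C)
    (m : forall c, mhom c (O0 c) (O1 c)) :
    forall j, mhom (al j) (objsub al sg A v O0 j) (objsub al sg A v O1 j) :=
  fun j =>
    if sg j == v as b
      return mhom (al j) (if b then O0 (al j) else A (sg j))
                         (if b then O1 (al j) else A (sg j))
    then m (al j) else mid (al j) (A (sg j)).

Section Fams.
Context (C : category) (X Y : C) (f : hom X Y).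
Definition mFX : forall c, mhom c (if c then X else Y) X :=
  fun c => if c as c0 return mhom c0 (if c0 then X else Y) X then idm X else f.
Definition mXf : forall c, mhom c X (if c then Y else X) :=
  fun c => if c as c0 return mhom c0 X (if c0 then Y else X) then f else idm X.
Definition mYf : forall c, mhom c (if c then X else Y) Y :=
  fun c => if c as c0 return mhom c0 (if c0 then X else Y) Y then f else idm Y.
Definition mfY : forall c, mhom c Y (if c then Y else X) :=
  fun c => if c as c0 return mhom c0 Y (if c0 then Y else X) then idm Y else f.
End Fams.

Definition dinatural_in (C : category) (I J : Type) (al : I -> bool) (be : J -> bool)
    (F : fdata C al) (G : fdata C be) (V : eqType) (sg : I -> V) (tu : J -> V)
    (phi : trans F G sg tu) (v : V) : Prop :=
  forall (A : V -> C) (X Y : C) (f : hom X Y),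
    comp (fmor G (msub be tu A v (mXf f)))
         (comp (phi (upd A v X)) (fmor F (msub al sg A v (mFX f))))
    = comp (fmor G (msub be tu A v (mfY f)))
         (comp (phi (upd A v Y)) (fmor F (msub al sg A v (mYf f)))).

(* functors C^op x C -> C: arguments indexed by bool, false = contravariant *)
Definition sgn2 (b : bool) : bool := b.

Definition focF (C : category) (I : Type) (V : eqType) (al : I -> bool)
    (sg : I -> V) (T : fdata C al) (A : V -> C) (k : V) : fdata C sgn2 :=
  @FData C bool sgn2 (fun P => fobj T (objsub al sg A k P))
    (fun P Q m => fmor T (msub al sg A k m)).

Definition focT (C : category) (I J : Type) (V : eqType) (al : I -> bool) (be : J -> bool)
    (T : fdata C al) (S : fdata C be) (sg : I -> V) (tu : J -> V)
    (phi : trans T S sg tu) (A : V -> C) (k : V) :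
    trans (focF sg T A k) (focF tu S A k) (fun _ : bool => tt) (fun _ : bool => tt) :=
  fun A' => phi (upd A k (A' tt)).

(* arguments (A,B,C,D) indexed by (false,false),(false,true),(true,false),(true,true)
   with variances [+,-,-,+] *)
Definition sgn4 (p : bool * bool) : bool := if p.1 then p.2 else ~~ p.2.

(* H(Fn^op, Fp) *)
Definition csubst (C : category) (H Fn Fp : fdata C sgn2) : fdata C sgn4 :=
  @FData C (bool * bool) sgn4
    (fun P => fobj H (fun s => if s then fobj Fp (fun b => P (true, b))
                               else fobj Fn (fun b => P (false, b))))
    (fun P Q m => fmor H (fun s =>
       if s as s0 return
          mhom s0 (if s0 then fobj Fp (fun b => P (true, b)) else fobj Fn (fun b => P (false, b)))
                  (if s0 then fobj Fp (fun b => Q (true, b)) else fobj Fn (fun b => Q (false, b)))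
       then fmor Fp (fun b => m (true, b))
       else fmor Fn (fun b => mflip (m (false, b))))).

Definition chcomp (C : category) (F G H K : fdata C sgn2)
    (phi : trans F G (fun _ : bool => tt) (fun _ : bool => tt))
    (psi : trans H K (fun _ : bool => tt) (fun _ : bool => tt)) :
    trans (csubst H G F) (csubst K F G) (fun _ : bool * bool => tt) (fun _ => tt) :=
  fun A =>
    comp (fmor K (fun s =>
            if s as s0 return mhom s0 (fobj F (fun _ => A tt))
                                      (if s0 then fobj G (fun _ => A tt) else fobj F (fun _ => A tt))
            then phi A else idm (fobj F (fun _ => A tt))))
     (comp (psi (fun _ => fobj F (fun _ => A tt)))
        (fmor H (fun s =>
            if s as s0 return mhom s0 (if s0 then fobj F (fun _ => A tt) else fobj G (fun _ => A tt))
                                      (fobj F (fun _ => A tt))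
            then idm (fobj F (fun _ => A tt)) else phi A))).

(* variables of phi *_i psi : B_j (j <> i) and A_1..A_n *)
Definition hvar (m n : nat) (i : 'I_m) : eqType := ({j : 'I_m | j != i} + 'I_n)%type.

Section Slots.
Local Unset Implicit Arguments.
Context (C : category) (n m p q : nat) (i : 'I_m)
        (ap : 'I_p -> bool) (aq : 'I_q -> bool)
        (Fp : fdata C ap) (Fq : fdata C aq)
        (sp : 'I_p -> 'I_n) (sq : 'I_q -> 'I_n).

(* a position u of the outer functor with (e = (eta u == i)) and variance g
   is replaced by the arguments of: Fp if e && g, Fq^op if e && ~~g,
   and stays a single argument otherwise *)
Definition slotT (e g : bool) : Type := if e then (if g then 'I_p else 'I_q) else unit.

Definition slotar (e g : bool) : slotT e g -> bool :=
  match e as e0 return slotT e0 g -> bool with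
  | true => match g as g0 return slotT true g0 -> bool with
            | true => ap | false => fun j => ~~ aq j end
  | false => fun _ => g
  end.

Definition slotobj (e g : bool) : (slotT e g -> C) -> C :=
  match e as e0 return (slotT e0 g -> C) -> C with
  | true => match g as g0 return (slotT true g0 -> C) -> C with
            | true => fun P => fobj Fp P | false => fun P => fobj Fq P end
  | false => fun P => P tt
  end.

Definition slotmor (e g : bool) :
  forall P Q : slotT e g -> C, (forall s, mhom (slotar e g s) (P s) (Q s)) ->
    mhom g (slotobj e g P) (slotobj e g Q) :=
  match e as e0 return
    forall P Q : slotT e0 g -> C, (forall s, mhom (slotar e0 g s) (P s) (Q s)) ->
      mhom g (slotobj e0 g P) (slotobj e0 g Q) with
  | true => match g as g0 return
      forall P Q : slotT true g0 -> C, (forall s, mhom (slotar true g0 s) (P s) (Q s)) ->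
        mhom g0 (slotobj true g0 P) (slotobj true g0 Q) with
    | true => fun P Q mm => fmor Fp mm
    | false => fun P Q mm => fmor Fq (fun j => mflip (mm j))
    end
  | false => fun P Q mm => mm tt
  end.

Definition slotvar (x : 'I_m) (e g : bool) (E : (x == i) = e) : slotT e g -> hvar n i :=
  match e as e0 return (x == i) = e0 -> slotT e0 g -> hvar n i with
  | true => fun _ => match g as g0 return slotT true g0 -> hvar n i with
            | true => fun j => inr (sp j) | false => fun j => inr (sq j) end
  | false => fun E' _ => inl (exist _ x (negbT E'))
  end E.

Context (c : nat) (ga : 'I_c -> bool) (H : fdata C ga) (et : 'I_c -> 'I_m).

Definition subI : Type := {u : 'I_c & slotT (et u == i) (ga u)}.
Definition subar (x : subI) : bool :=
  slotar (et (projT1 x) == i) (ga (projT1 x)) (projT2 x).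
Definition subvar (x : subI) : hvar n i :=
  slotvar (et (projT1 x)) (et (projT1 x) == i) (ga (projT1 x)) erefl (projT2 x).
Definition subF : fdata C subar :=
  @FData C subI subar
    (fun P => fobj H (fun u => slotobj (et u == i) (ga u)
                                 (fun s => P (existT _ u s))))
    (fun P Q mm => fmor H (fun u => slotmor (et u == i) (ga u)
                         (fun s => P (existT _ u s)) (fun s => Q (existT _ u s))
                         (fun s => mm (existT _ u s)))).
End Slots.
Arguments slotT p q e g : clear implicits.
Arguments slotar {p q} ap aq e g _.
Arguments slotobj {C p q ap aq} Fp Fq e g _.
Arguments slotmor {C p q ap aq} Fp Fq e g P Q _.
Arguments slotvar {n m p q} i sp sq x e g E _.
Arguments subI {m} p q i {c} ga et.
Arguments subar {m p q} i ap aq {c} ga et x.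
Arguments subvar {n m p q} i sp sq {c} ga et x.
Arguments subF {C m p q} i {ap aq} Fp Fq {c ga} H et.

Section HComp.
Local Unset Implicit Arguments.
Context (C : category) (n m a b c d : nat)
  (al : 'I_a -> bool) (be : 'I_b -> bool) (ga : 'I_c -> bool) (de : 'I_d -> bool)
  (F : fdata C al) (G : fdata C be) (H : fdata C ga) (K : fdata C de)
  (sg : 'I_a -> 'I_n) (tu : 'I_b -> 'I_n) (et : 'I_c -> 'I_m) (th : 'I_d -> 'I_m)
  (phi : trans F G sg tu) (psi : trans H K et th) (i : 'I_m).

Definition Aof (Z : hvar n i -> C) : 'I_n -> C := fun k => Z (inr k).
Definition Bof0 (Z : hvar n i -> C) (d0 : C) (x : 'I_m) (e : bool) (E : (x == i) = e) : C :=
  match e as e0 return (x == i) = e0 -> C with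
  | true => fun _ => d0
  | false => fun E' => Z (inl (exist _ x (negbT E')))
  end E.
Definition Bof (Z : hvar n i -> C) (d0 : C) : 'I_m -> C :=
  fun x => Bof0 Z d0 x (x == i) erefl.

Definition FAof (Z : hvar n i -> C) : C := fobj F (fun j => Aof Z (sg j)).

Definition hpiece (Z : hvar n i -> C) (x : 'I_m) (e g : bool) (E : (x == i) = e) :
  mhom g (slotobj F G e g (fun s => Z (slotvar i sg tu x e g E s))) (Bof0 Z (FAof Z) x e E) :=
  match e as e0 return forall E0 : (x == i) = e0,
     mhom g (slotobj F G e0 g (fun s => Z (slotvar i sg tu x e0 g E0 s))) (Bof0 Z (FAof Z) x e0 E0) with
  | true => fun E0 =>
     match g as g0 return
        mhom g0 (slotobj F G true g0 (fun s => Z (slotvar i sg tu x true g0 E0 s))) (FAof Z) with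
     | true => idm (FAof Z)
     | false => phi (Aof Z)
     end
  | false => fun E0 => mid g (Z (inl (exist _ x (negbT E0))))
  end E.

Definition kpiece (Z : hvar n i -> C) (x : 'I_m) (e g : bool) (E : (x == i) = e) :
  mhom g (Bof0 Z (FAof Z) x e E) (slotobj G F e g (fun s => Z (slotvar i tu sg x e g E s))) :=
  match e as e0 return forall E0 : (x == i) = e0,
     mhom g (Bof0 Z (FAof Z) x e0 E0) (slotobj G F e0 g (fun s => Z (slotvar i tu sg x e0 g E0 s))) with
  | true => fun E0 =>
     match g as g0 return
        mhom g0 (FAof Z) (slotobj G F true g0 (fun s => Z (slotvar i tu sg x true g0 E0 s))) with
     | true => phi (Aof Z)
     | false => idm (FAof Z)
     end
  | false => fun E0 => mid g (Z (inl (exist _ x (negbT E0))))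
  end E.

(* phi *_i psi : H(G^op,F) -> K(F^op,G) *)
Definition hcomp :
  trans (subF i F G H et) (subF i G F K th) (subvar i sg tu ga et) (subvar i tu sg de th) :=
  fun Z =>
    comp (fmor K (fun v => kpiece Z (th v) (th v == i) (de v) erefl))
      (comp (psi (Bof Z (FAof Z)))
         (fmor H (fun u => hpiece Z (et u) (et u == i) (ga u) erefl))).
End HComp.
Arguments hcomp {C n m a b c d al be ga de F G H K sg tu et th} phi psi i _.

From Pilot Require Import Defs.
From mathcomp Require Import all_boot.
From Stdlib Require Import FunctionalExtensionality Eqdep.

Set Implicit Arguments. Unset Strict Implicit. Unset Printing Implicit Defensive.

(* The i-th horizontal composite phi *_i psi, evaluated at objects Z with the
   variable A_k set to W, and the classical composite of the focalisations
   bar-phi^k * bar-psi^i, evaluated at W, are built from the same pieces: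
   psi at the tuple B[F(A sigma)/i], phi at A[W/k], identities elsewhere,
   and the functors H, K applied to F, G or G^op, F^op in the slots of the
   variable i.  Hence, once B agrees with the B-part of Z, the two sides of
   the dinaturality equation of phi *_i psi in the variable A_k are the very
   same morphisms as the two sides of the dinaturality equation of the
   classical composite; only their types are written differently.
   To compare morphisms whose types agree only propositionally, we pack each
   morphism with its endpoints into the type [Arr C] and compare the packed
   arrows; packing is injective (by [inj_pair2]), compatible with
   composition and with the action of functors on tuples of morphisms.
   The theorem then follows by translating dinaturality equations in both
   directions: given A and B we form Z from them, and given Z we read off B.
   The comparison is an identity of morphisms. *)

Definition Arr (C : category) := {X : C & {Y : C & hom X Y}}.

Definition pack (C : category) (X Y : C) (f : hom X Y) : Arr C :=
  existT _ X (existT _ Y f).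

Definition mpack (C : category) (c : bool) (X Y : C) : mhom c X Y -> Arr C :=
  match c as c0 return mhom c0 X Y -> Arr C with
  | true => fun f => pack f | false => fun f => pack f end.

Section PackedArrows.
Variable C : category.

Lemma pack_inj (X Y : C) (f g : hom X Y) : pack f = pack g -> f = g.
Proof. by move=> efg; do 2 apply inj_pair2 in efg. Qed.

Lemma pack_ends (X Y X' Y' : C) (f : hom X Y) (g : hom X' Y') :
  pack f = pack g -> X = X' /\ Y = Y'.
Proof.
move=> efg; split; first exact: (f_equal (@projT1 _ _) efg).
exact: (f_equal (fun p : Arr C => projT1 (projT2 p)) efg).
Qed.

Lemma pack_eq_iff (X Y X' Y' : C) (f g : hom X Y) (f' g' : hom X' Y') :
  pack f = pack f' -> pack g = pack g' -> (f = g <-> f' = g').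
Proof.
move=> ef eg; have [eX eY] := pack_ends ef; subst X' Y'.
by rewrite (pack_inj ef) (pack_inj eg).
Qed.

Lemma pack_comp (X0 Y0 Z0 X1 Y1 Z1 : C)
  (f : hom Y0 Z0) (g : hom X0 Y0) (f' : hom Y1 Z1) (g' : hom X1 Y1) :
  pack f = pack f' -> pack g = pack g' -> pack (Defs.comp f g) = pack (Defs.comp f' g').
Proof.
move=> ef eg; have [eY eZ] := pack_ends ef; have [eX _] := pack_ends eg.
by subst Y1 Z1 X1; rewrite (pack_inj ef) (pack_inj eg).
Qed.

Lemma mpack_ends (c : bool) (X Y X' Y' : C) (f : mhom c X Y) (g : mhom c X' Y') :
  mpack f = mpack g -> X = X' /\ Y = Y'.
Proof. by case: c f g => f g /= /pack_ends []; split. Qed.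

Lemma mpack_inj (c : bool) (X Y : C) (f g : mhom c X Y) : mpack f = mpack g -> f = g.
Proof. by case: c f g => f g /= /pack_inj. Qed.

Lemma pack_fmor (I : Type) (al : I -> bool) (T : fdata C al)
  (X1 Y1 X2 Y2 : I -> C) (m1 : forall j, mhom (al j) (X1 j) (Y1 j))
  (m2 : forall j, mhom (al j) (X2 j) (Y2 j)) :
  (forall j, mpack (m1 j) = mpack (m2 j)) -> pack (fmor T m1) = pack (fmor T m2).
Proof.
move=> em.
have eX : X1 = X2 by apply: functional_extensionality => j; case: (mpack_ends (em j)).
have eY : Y1 = Y2 by apply: functional_extensionality => j; case: (mpack_ends (em j)).
subst X2 Y2.
by have -> : m1 = m2 by apply: functional_extensionality_dep => j; apply: mpack_inj.
Qed.

Lemma pack_trans (I J V : Type) (al : I -> bool) (be : J -> bool)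
  (T : fdata C al) (S : fdata C be) (sg : I -> V) (tu : J -> V)
  (phi : trans T S sg tu) (A1 A2 : V -> C) : A1 = A2 -> pack (phi A1) = pack (phi A2).
Proof. by move=> ->. Qed.
End PackedArrows.

Definition msub_at (C : category) (V : Type) (A : V -> C) (x : V) (e g : bool)
  (O0 O1 : bool -> C) (mm : forall c, mhom c (O0 c) (O1 c)) :
  mhom g (if e then O0 g else A x) (if e then O1 g else A x) :=
  if e as b return mhom g (if b then O0 g else A x) (if b then O1 g else A x)
  then mm g else mid g (A x).

Section FocalComparison.
Variables (C : category) (n m a b c d : nat)
  (al : 'I_a -> bool) (be : 'I_b -> bool) (ga : 'I_c -> bool) (de : 'I_d -> bool)
  (F : fdata C al) (G : fdata C be) (H : fdata C ga) (K : fdata C de)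
  (sg : 'I_a -> 'I_n) (tu : 'I_b -> 'I_n) (et : 'I_c -> 'I_m) (th : 'I_d -> 'I_m)
  (phi : trans F G sg tu) (psi : trans H K et th) (i : 'I_m) (k : 'I_n).

Variables (Z : hvar n i -> C) (B : 'I_m -> C)
  (B_Z : forall x (h : x != i), B x = Z (inl (exist _ x h))).

Let AZ : 'I_n -> C := fun j => Z (inr j).

(* Moving A_k along a morphism acts on a substituted slot of the outer functor
   exactly as the focalised inner functor acts (or as the identity on the
   unchanged slots). *)
Lemma slot_msub (p q : nat) (ap : 'I_p -> bool) (aq : 'I_q -> bool)
  (Fp : fdata C ap) (Fq : fdata C aq) (sp : 'I_p -> 'I_n) (sq : 'I_q -> 'I_n)
  (OX0 OX1 : bool -> C) (mX : forall c, mhom c (OX0 c) (OX1 c))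
  (x : 'I_m) (g e : bool) (E : (x == i) = e)
  (O0 O1 : bool -> C) (mm : forall s, mhom s (O0 s) (O1 s))
  (mm_co : mpack (mm true) = pack (fmor Fp (msub ap sp AZ k mX)))
  (mm_contra : mpack (mm false)
               = pack (fmor Fq (msub aq sq AZ k (fun s => mflip (mX (~~ s)))))) :
  mpack (slotmor Fp Fq e g
     (objsub (slotar ap aq e g) (slotvar i sp sq x e g E) Z (inr k) OX0)
     (objsub (slotar ap aq e g) (slotvar i sp sq x e g E) Z (inr k) OX1)
     (msub (slotar ap aq e g) (slotvar i sp sq x e g E) Z (inr k) mX))
  = mpack (msub_at B x e g mm).
Proof.
rewrite /= in mm_co mm_contra.
case: e E => E; last by rewrite /= (B_Z (negbT E)).
case: g => /=; first by rewrite mm_co.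
rewrite mm_contra; apply: pack_fmor => j; rewrite /msub /objsub /=.
change (inr (sq j) == inr k :> hvar n i) with (sq j == k).
by case: (sq j == k); case: (aq j).
Qed.

Lemma kpiece_msub (W : C) (x : 'I_m) (g e : bool) (E : (x == i) = e)
  (O0 O1 : bool -> C) (mm : forall s, mhom s (O0 s) (O1 s))
  (mm_co : mpack (mm true) = pack (phi (fun j => upd Z (inr k) W (inr j))))
  (mm_contra : mpack (mm false) = pack (idm (FAof C n m a al F sg i (upd Z (inr k) W)))) :
  mpack (kpiece C n m a b al be F G sg tu phi i (upd Z (inr k) W) x e g E)
  = mpack (msub_at B x e g mm).
Proof.
rewrite /= in mm_co mm_contra.
case: e E => E; last by rewrite /= (B_Z (negbT E)).
by case: g => /=; [rewrite mm_co | rewrite mm_contra].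
Qed.

Lemma hpiece_msub (W : C) (x : 'I_m) (g e : bool) (E : (x == i) = e)
  (O0 O1 : bool -> C) (mm : forall s, mhom s (O0 s) (O1 s))
  (mm_co : mpack (mm true) = pack (idm (FAof C n m a al F sg i (upd Z (inr k) W))))
  (mm_contra : mpack (mm false) = pack (phi (fun j => upd Z (inr k) W (inr j)))) :
  mpack (hpiece C n m a b al be F G sg tu phi i (upd Z (inr k) W) x e g E)
  = mpack (msub_at B x e g mm).
Proof.
rewrite /= in mm_co mm_contra.
case: e E => E; last by rewrite /= (B_Z (negbT E)).
by case: g => /=; [rewrite mm_co | rewrite mm_contra].
Qed.

Lemma Bof0_upd (W D : C) (x : 'I_m) (e : bool) (E : (x == i) = e) :
  Bof0 C n m i (upd Z (inr k) W) D x e E = if e then D else B x.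
Proof. by case: e E => E //=; rewrite (B_Z (negbT E)). Qed.

Lemma hcomp_side_focal (A' : unit -> C) (W : C) (O0H O1K : bool -> C)
  (mH : forall c, mhom c (O0H c) W) (mK : forall c, mhom c W (O1K c)) :
  pack (Defs.comp (fmor (subF i G F K th)
                (msub (subar i be al de th) (subvar i tu sg de th) Z (inr k) mK))
        (Defs.comp (hcomp phi psi i (upd Z (inr k) W))
              (fmor (subF i F G H et)
                (msub (subar i al be ga et) (subvar i sg tu ga et) Z (inr k) mH))))
  = pack (Defs.comp (fmor (csubst (focF th K B i) (focF sg F AZ k) (focF tu G AZ k))
                  (msub sgn4 (fun _ => tt) A' tt mK))
        (Defs.comp (chcomp (focT phi AZ k) (focT psi B i) (upd A' tt W))
              (fmor (csubst (focF et H B i) (focF tu G AZ k) (focF sg F AZ k))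
                  (msub sgn4 (fun _ => tt) A' tt mH)))).
Proof.
rewrite /hcomp /chcomp.
apply: pack_comp; last apply: pack_comp; [|apply: pack_comp; last apply: pack_comp|].
- rewrite /subF /csubst /focF; cbn [fmor fobj].
  by apply: pack_fmor => v; apply: (slot_msub _ erefl).
- by apply: pack_fmor => v; apply: (kpiece_msub _ erefl).
- by apply: pack_trans; apply: functional_extensionality => x; apply: (Bof0_upd _ _ erefl).
- rewrite /focF; cbn [fmor fobj].
  by apply: (@pack_fmor C _ ga H) => v; apply: (hpiece_msub _ erefl).
- rewrite /subF /csubst /focF; cbn [fmor fobj].
  by apply: pack_fmor => v; apply: (slot_msub _ erefl).
Qed.

Lemma hcomp_dinat_eq_focal (A' : unit -> C) (X Y : C) (f : hom X Y) :
  (Defs.comp (fmor (subF i G F K th)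
           (msub (subar i be al de th) (subvar i tu sg de th) Z (inr k) (mXf f)))
     (Defs.comp (hcomp phi psi i (upd Z (inr k) X))
           (fmor (subF i F G H et)
              (msub (subar i al be ga et) (subvar i sg tu ga et) Z (inr k) (mFX f))))
   = Defs.comp (fmor (subF i G F K th)
           (msub (subar i be al de th) (subvar i tu sg de th) Z (inr k) (mfY f)))
     (Defs.comp (hcomp phi psi i (upd Z (inr k) Y))
           (fmor (subF i F G H et)
              (msub (subar i al be ga et) (subvar i sg tu ga et) Z (inr k) (mYf f)))))
  <->
  (Defs.comp (fmor (csubst (focF th K B i) (focF sg F AZ k) (focF tu G AZ k))
           (msub sgn4 (fun _ => tt) A' tt (mXf f)))
     (Defs.comp (chcomp (focT phi AZ k) (focT psi B i) (upd A' tt X))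
           (fmor (csubst (focF et H B i) (focF tu G AZ k) (focF sg F AZ k))
              (msub sgn4 (fun _ => tt) A' tt (mFX f))))
   = Defs.comp (fmor (csubst (focF th K B i) (focF sg F AZ k) (focF tu G AZ k))
           (msub sgn4 (fun _ => tt) A' tt (mfY f)))
     (Defs.comp (chcomp (focT phi AZ k) (focT psi B i) (upd A' tt Y))
           (fmor (csubst (focF et H B i) (focF tu G AZ k) (focF sg F AZ k))
              (msub sgn4 (fun _ => tt) A' tt (mYf f))))).
Proof. exact: pack_eq_iff (hcomp_side_focal _ _ _) (hcomp_side_focal _ _ _). Qed.
End FocalComparison.

Lemma Bof_off (C : category) (n m : nat) (i : 'I_m) (Z : hvar n i -> C) (D : C)
  (x : 'I_m) (h : x != i) : Bof C n m i Z D x = Z (inl (exist _ x h)).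
Proof.
suff Bof0_off e (E : (x == i) = e) : Bof0 C n m i Z D x e E = Z (inl (exist _ x h)).
  exact: Bof0_off.
case: e E => E /=; first by exfalso; move/negP: h; rewrite E.
by rewrite (bool_irrelevance (negbT E) h).
Qed.

Theorem mainTheorem11 (C : category) (n m a b c d : nat)
  (al : 'I_a -> bool) (be : 'I_b -> bool) (ga : 'I_c -> bool) (de : 'I_d -> bool)
  (F : mfunctor C al) (G : mfunctor C be) (H : mfunctor C ga) (K : mfunctor C de)
  (sg : 'I_a -> 'I_n) (tu : 'I_b -> 'I_n) (et : 'I_c -> 'I_m) (th : 'I_d -> 'I_m)
  (phi : trans F G sg tu) (psi : trans H K et th) (i : 'I_m)
  (psi_dinat : dinatural_in psi i) (k : 'I_n) :
  dinatural_in (hcomp phi psi i) (inr k : hvar n i)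
  <-> (forall (A : 'I_n -> C) (B : 'I_m -> C),
        dinatural_in (chcomp (focT phi A k) (focT psi B i)) tt).
Proof.
split.
-
  move=> hcomp_dinat A B A' X Y f.
  pose Z : hvar n i -> C :=
    fun x => match x with inl (exist y _) => B y | inr j => A j end.
  have B_Z : forall x (h : x != i), B x = Z (inl (exist _ x h)) by [].
  exact/(hcomp_dinat_eq_focal phi psi k B_Z A' f)/hcomp_dinat.
-
  move=> focal_dinat Z X Y f.
  pose B := Bof C n m i Z (Z (inr k)).
  have B_Z : forall x (h : x != i), B x = Z (inl (exist _ x h)) by exact: Bof_off.
  exact/(hcomp_dinat_eq_focal phi psi k B_Z (fun _ => X) f)/focal_dinat.
Qed.
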